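(* Let $\delta\geq 6$ be an integer of the form $\delta=4k+2$ with $k$ a positive integer. Then there does not exist a positive odd integer $n$ with the property that there exist positive integers $d_1, d_2$, each dividing $\frac{n^2+1}{2}$, such that $d_1+d_2=\delta n$. *)

From mathcomp Require Import all_boot.

From mathcomp Require Import all_boot zify.

(* Write g = gcd(d1, d2) and d1 = a g, d2 = b g.  Since g divides the odd
   number N = (n^2 + 1)/2, it is odd and coprime to n, so g divides the even
   coefficient c of d1 + d2 = c n; with c = e g (e even) we get a + b = e n.
   As a b g = lcm(d1, d2) divides N, say N = m a b g, squaring gives
   (a + b)^2 + e^2 = 2 e^2 g m a b.  Vieta jumping shows that the coefficient
   of such an equation must be e^2 + 4, which forces e = 2, g = 1, c = 2. *)

Lemma sqS_half_double (n : nat) : odd n -> n ^ 2 + 1 = 2 * ((n ^ 2 + 1) %/ 2).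
Proof. by move=> odd_n; rewrite mulnC divnK // dvdn2 oddD oddX odd_n. Qed.

Lemma odd_sqS_half (n : nat) : odd n -> odd ((n ^ 2 + 1) %/ 2).
Proof.
move=> odd_n; have [j ->] : exists j, n = j.*2.+1.
  by exists n./2; rewrite -[LHS]odd_double_half odd_n.
have -> : j.*2.+1 ^ 2 + 1 = (j * j + j).*2.+1 * 2 by rewrite -!muln2; nia.
by rewrite mulnK //= odd_double.
Qed.

Lemma coprime_dvd_sqS (g n : nat) : g %| n ^ 2 + 1 -> coprime g n.
Proof.
move=> dv_g; rewrite /coprime -dvdn1 -(dvdn_addr 1 (_ : _ %| n ^ 2)).
  exact: dvdn_trans (dvdn_gcdl g n) dv_g.
by rewrite -mulnn dvdn_mulr // dvdn_gcdr.
Qed.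

Lemma lcmn_gcd_quotients (d1 d2 : nat) : 0 < d1 ->
  lcmn d1 d2 = d1 %/ gcdn d1 d2 * (d2 %/ gcdn d1 d2) * gcdn d1 d2.
Proof.
move=> d1_gt0; have g_gt0 : 0 < gcdn d1 d2 by rewrite gcdn_gt0 d1_gt0.
apply/eqP; rewrite -(eqn_pmul2r g_gt0) muln_lcm_gcd -mulnA.
by rewrite -mulnACA !divnK ?dvdn_gcdl ?dvdn_gcdr.
Qed.

Lemma vieta_jumping {E C a b : nat} : 4 <= E -> 2 * E <= C -> 0 < a -> 0 < b ->
  (a + b) ^ 2 + E = C * a * b -> C = E + 4.
Proof.
move=> E_ge4 le_2E_C; have [s] := ubnP (a + b); elim: s a b => // s IH a b ltab a0 b0 eq_ab.
wlog le_ba : a b ltab a0 b0 eq_ab / b <= a.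
  move=> W; case: (leqP b a) => [|/ltnW le_ab]; first exact: W.
  by apply: (W b a) => //; lia.
have [eq_ba | lt_ba] := eqVneq b a.
  have b1 : b = 1 by subst a; nia.
  by subst; lia.
have {le_ba}lt_ba : b < a by rewrite ltn_neqAle lt_ba.
(* [a'] is the other root of [X^2 - (C - 2) b X + (b^2 + E)], which has root [a]. *)
pose a' := C * b - 2 * b - a.
have prod_roots : a * a' = b ^ 2 + E by rewrite /a'; nia.
have lt_a'a : a' < a by rewrite ltnNge; apply/negP => le_aa'; nia.
apply: (IH a' b); [lia | nia | done | rewrite /a'; nia].
Qed.

Lemma add4_eq_double_mul (E K : nat) : 4 <= E -> E + 4 = 2 * E * K -> E = 4 /\ K = 1.
Proof.
case: K => [|[|K]] E_ge4; [lia | lia | move=> E_eq].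
have : 2 * E * 2 <= 2 * E * K.+2 by rewrite leq_pmul2l ?muln_gt0 //; lia.
lia.
Qed.

Lemma divisor_pair_sum_even_coef_eq2 {n d1 d2 c : nat} : odd n -> 0 < d1 -> 0 < d2 ->
  d1 %| (n ^ 2 + 1) %/ 2 -> d2 %| (n ^ 2 + 1) %/ 2 -> d1 + d2 = c * n ->
  ~~ odd c -> c = 2.
Proof.
move=> odd_n d1_gt0 d2_gt0 dv_d1N dv_d2N sum_d even_c.
set N := (n ^ 2 + 1) %/ 2 in dv_d1N dv_d2N.
have N2 : n ^ 2 + 1 = 2 * N := sqS_half_double n odd_n.
set g := gcdn d1 d2; set a := d1 %/ g; set b := d2 %/ g.
have g_gt0 : 0 < g by rewrite gcdn_gt0 d1_gt0.
have d1E : d1 = a * g by rewrite divnK ?dvdn_gcdl.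
have d2E : d2 = b * g by rewrite divnK ?dvdn_gcdr.
have dv_gN : g %| N := dvdn_trans (dvdn_gcdl d1 d2) dv_d1N.
have dv_gc : g %| c.
  have cop_gn : coprime g n by apply: coprime_dvd_sqS; rewrite N2 dvdn_mull.
  by rewrite -(Gauss_dvdl c cop_gn) -sum_d dvdn_add ?dvdn_gcdl ?dvdn_gcdr.
set e := c %/ g; have cE : c = e * g by rewrite divnK.
have odd_g : odd g := dvdn_odd dv_gN (odd_sqS_half n odd_n).
have even_e : ~~ odd e by move: even_c; rewrite cE oddM odd_g andbT.
have sum_ab : a + b = e * n.
  by apply/eqP; rewrite -(eqn_pmul2r g_gt0) mulnDl -d1E -d2E sum_d cE mulnAC.
have a_gt0 : 0 < a by move: d1_gt0; rewrite d1E muln_gt0 => /andP[].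
have b_gt0 : 0 < b by move: d2_gt0; rewrite d2E muln_gt0 => /andP[].
have e_ge2 : 2 <= e.
  by move: even_e sum_ab; case: (e) => [|[|]] //=; lia.
have [m Nm] : exists m, N = m * (a * b * g).
  by apply/dvdnP; rewrite -lcmn_gcd_quotients // dvdn_lcm dv_d1N dv_d2N.
have m_gt0 : 0 < m.
  by move: (odd_sqS_half n odd_n); rewrite -/N Nm; case: (m).
have sum_ab_sqE : (a + b) ^ 2 + e ^ 2 = 2 * e ^ 2 * (g * m) * a * b.
  by rewrite sum_ab expnMn -[X in _ + X]muln1 -mulnDr N2 Nm; nia.
have e2_ge4 : 4 <= e ^ 2 by rewrite (_ : 4 = 2 ^ 2) // leq_exp2r.
have gm_gt0 : 0 < g * m by rewrite muln_gt0 g_gt0.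
have := vieta_jumping e2_ge4 _ a_gt0 b_gt0 sum_ab_sqE.
rewrite -[X in X <= _]muln1 leq_mul2l gm_gt0 orbT => /(_ isT) e2S.
have [e2_4 gm1] : e ^ 2 = 4 /\ g * m = 1.
  exact: add4_eq_double_mul e2_ge4 (esym e2S).
have g1 : g = 1 by move/eqP: gm1; rewrite muln_eq1 => /andP[/eqP].
have e2 : e = 2 by apply/eqP; rewrite -(eqn_exp2r _ _ (isT : 0 < 2)) e2_4.
by rewrite cE e2 g1.
Qed.

Theorem theorem3 (k : nat) (hk : 0 < k) :
  ~ exists n : nat, [/\ 0 < n, odd n &
      exists d1 d2 : nat, [/\ 0 < d1, 0 < d2,
        d1 %| (n ^ 2 + 1) %/ 2, d2 %| (n ^ 2 + 1) %/ 2 &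
        d1 + d2 = (4 * k + 2) * n]].
Proof.
case=> n [_ odd_n [d1 [d2 [d1_gt0 d2_gt0 dv_d1 dv_d2 sum_d]]]].
have even_c : ~~ odd (4 * k + 2) by rewrite addn2 /= negbK oddM.
have := divisor_pair_sum_even_coef_eq2 odd_n d1_gt0 d2_gt0 dv_d1 dv_d2 sum_d even_c.
lia.
Qed.
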